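(* Let $w$ be the one-sided fixed point starting with $a$ of the Fibonacci substitution, and let $n\ge1$. There exist strictly increasing sequences $(j_k)_{k\ge0}$, $(l_k)_{k\ge0}$, $(m_k)_{k\ge0}$ of even nonnegative integers such that \[C_a(X)=C_{a,R_n}(X)\sum_{k=0}^\infty X^{j_k}+C_{a,S_n}(X)\sum_{k=0}^\infty X^{l_k}+C_{a,T_n}(X)\sum_{k=0}^\infty X^{m_k}\] as formal power series (hence also for all real $X\in(-1,1)$).
   Context: The Fibonacci substitution is $\sigma(a)=ab$, $\sigma(b)=a$, extended to words by concatenation; $w=w_0w_1\ldots=\lim_{m\to\infty}\sigma^m(a)$ is its fixed point starting with $a$, and $C_a(X)=\sum_{n\ge0}1_a(w_n)X^n$. Let $A_n=\sigma^n(a)$, $B_n=\sigma^n(b)$, and $R_n=A_{3n}B_{3n}$, $S_n=A_{3n}A_{3n}$, $T_n=B_{3n}A_{3n}$ (concatenations). With Fibonacci numbers $f_1=f_2=1$, $f_{i+2}=f_{i+1}+f_i$, one has $|A_n|=f_{n+2}$, $|R_n|=|T_n|=f_{3n+3}$, $|S_n|=2f_{3n+2}$, all even. For a finite word $u=u_0\cdots u_L$, $C_{a,u}(X)=\sum_{i=0}^{L}1_a(u_i)X^i$. *)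

From mathcomp Require Import all_boot.
Set Implicit Arguments. Unset Strict Implicit. Unset Printing Implicit Defensive.

Inductive letter := La | Lb.

Definition ind_a (x : letter) : nat := if x is La then 1 else 0.

Definition sigma_letter (x : letter) : seq letter :=
  if x is La then [:: La; Lb] else [:: La].
Definition sigma (u : seq letter) : seq letter := flatten (map sigma_letter u).

Definition A (n : nat) : seq letter := iter n sigma [:: La].
Definition B (n : nat) : seq letter := iter n sigma [:: Lb].

(* The fixed point w = lim_m sigma^m(a): since sigma^m(a) is a prefix of
   sigma^(m+1)(a) and |sigma^(i+1)(a)| = f_(i+3) > i, the i-th letter of w is
   the i-th letter of sigma^(i+1)(a). *)
Definition w (i : nat) : letter := nth La (A i.+1) i.

Definition Rw (n : nat) : seq letter := A (3 * n) ++ B (3 * n).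
Definition Sw (n : nat) : seq letter := A (3 * n) ++ A (3 * n).
Definition Tw (n : nat) : seq letter := B (3 * n) ++ A (3 * n).

Definition series := nat -> nat.

Definition C_a : series := fun N => ind_a (w N).

Definition C_au (u : seq letter) : series :=
  fun N => if N < size u then ind_a (nth La u N) else 0.

(* sum_{k >= 0} X^{j_k} for a strictly increasing sequence j (so j k >= k):
   the coefficient of X^N is the number of k with j_k = N, and any such k
   satisfies k <= N. *)
Definition pow_series (j : nat -> nat) : series :=
  fun N => \sum_(k < N.+1) (j k == N).

Definition ps_mul (f g : series) : series :=
  fun N => \sum_(i < N.+1) f i * g (N - i).
Definition ps_add (f g : series) : series := fun N => f N + g N.

From HB Require Import structures.
From mathcomp Require Import all_boot.
From mathcomp Require Import zify.
Set Implicit Arguments. Unset Strict Implicit. Unset Printing Implicit Defensive.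

(* Since w is a fixed point of sigma, so is it of sigma^(3n).  Cut w into
   consecutive pairs w_(2k) w_(2k+1); as w contains no factor bb, each pair
   is ab, aa or ba, so sigma^(3n) maps it to R_n, S_n or T_n.  Hence w is the
   concatenation of these blocks, the k-th block starting at position
   p_k = |sigma^(3n)(w_0 ... w_(2k-1))|.  All p_k are even because
   |A_(3n)| and |B_(3n)| are odd.  Letting j, l, m enumerate the p_k whose
   pair is ab, aa, ba respectively, each Cauchy product C_(a,u) * sum X^(j_k)
   places a copy of C_(a,u) at every block of the corresponding kind; the
   three products together recover C_a.  Each kind occurs infinitely often
   because w repeats its prefix of length |A_(3q)| at the even offset
   |A_(3q+1)|, so the sequences j, l, m are infinite.  The argument works
   for every n. *)

Lemma sigma_cat (u v : seq letter) : sigma (u ++ v) = sigma u ++ sigma v.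
Proof. by rewrite /sigma map_cat flatten_cat. Qed.

Lemma iter_sigma_cat (m : nat) (u v : seq letter) :
  iter m sigma (u ++ v) = iter m sigma u ++ iter m sigma v.
Proof. by elim: m => //= m ->; rewrite sigma_cat. Qed.

Lemma iter_sigma_nil (m : nat) : iter m sigma [::] = [::].
Proof. by elim: m => //= m ->. Qed.

Lemma A_S (m : nat) : A m.+1 = A m ++ B m.
Proof. by rewrite /A /B iterSr -iter_sigma_cat. Qed.

Lemma B_S (m : nat) : B m.+1 = A m.
Proof. by rewrite /A /B iterSr. Qed.

Lemma size_AB_gt0 (m : nat) : 0 < size (A m) /\ 0 < size (B m).
Proof.
elim: m => [|m [hA hB]] //.
by rewrite A_S B_S size_cat addn_gt0 hA.
Qed.

Lemma size_A_gt (m : nat) : m < size (A m).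
Proof.
elim: m => [|m IH] //; have [_ hB] := size_AB_gt0 m.
rewrite A_S size_cat; lia.
Qed.

Lemma A_prefix (m M : nat) : m <= M -> exists s, A M = A m ++ s.
Proof.
elim: M => [|M IH]; first by rewrite leqn0 => /eqP->; exists [::]; rewrite cats0.
rewrite leq_eqVlt => /orP[/eqP->|hm]; first by exists [::]; rewrite cats0.
by rewrite A_S; have [s ->] := IH hm; exists (s ++ B M); rewrite catA.
Qed.

Lemma nth_A (m M i : nat) :
  m <= M -> i < size (A m) -> nth La (A M) i = nth La (A m) i.
Proof. by move=> /A_prefix [s ->] hi; rewrite nth_cat hi. Qed.

Lemma wE (m i : nat) : i < size (A m) -> w i = nth La (A m) i.
Proof.
move=> hi; rewrite /w -(nth_A (leq_maxr m i.+1) (ltnW (size_A_gt i.+1))).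
exact: nth_A (leq_maxl m i.+1) hi.
Qed.

Lemma mkseq_w (m : nat) : mkseq w m = take m (A m).
Proof.
apply: (@eq_from_nth _ La); first by rewrite size_mkseq size_take size_A_gt.
move=> i; rewrite size_mkseq => hi.
by rewrite nth_mkseq // nth_take // (wE (ltn_trans hi (size_A_gt m))).
Qed.

(* w is a fixed point of sigma^L: the image under sigma^L of a prefix of w
   is again a prefix of w. *)
Lemma w_iter_sigma_prefix (L m i : nat) :
  i < size (iter L sigma (mkseq w m)) -> w i = nth La (iter L sigma (mkseq w m)) i.
Proof.
have eA : A (L + m) = iter L sigma (mkseq w m) ++ iter L sigma (drop m (A m)).
  by rewrite /A iterD -/(A m) -iter_sigma_cat mkseq_w cat_take_drop.
move=> hi; rewrite (wE (m := L + m)); last by rewrite eA size_cat ltn_addr.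
by rewrite eA nth_cat hi.
Qed.

(* Every b in a sigma-image is preceded by an a; hence w has no factor bb. *)
Lemma sigma_head (u : seq letter) : nth La (sigma u) 0 = La.
Proof. by case: u => [|[] u]. Qed.

Lemma sigma_no_bb (u : seq letter) (i : nat) :
  nth La (sigma u) i.+1 = Lb -> nth La (sigma u) i = La.
Proof.
elim: u i => [|x u IH] i //; rewrite /sigma /= -/(sigma u).
case: x => /=.
  by case: i => [|[|i]] /=; [done | rewrite sigma_head | exact: IH].
by case: i => [|i] /=; [rewrite sigma_head | exact: IH].
Qed.

Lemma w_no_bb (i : nat) : w i.+1 = Lb -> w i = La.
Proof.
have hi : i.+1 < size (A i.+2) by apply: ltn_trans (size_A_gt _).
by rewrite (wE hi) (wE (ltnW hi)) /A iterS; apply: sigma_no_bb.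
Qed.

Lemma size_AB_parity (q : nat) :
  [/\ odd (size (A (3 * q))), odd (size (B (3 * q))) & ~~ odd (size (A (3 * q).+1))].
Proof.
elim: q => [|q [hA hB _]] //.
have -> : 3 * q.+1 = (3 * q).+3 by lia.
by rewrite !(A_S, B_S) !size_cat !oddD hA hB.
Qed.

Definition block_start (n k : nat) : nat := size (iter (3 * n) sigma (mkseq w (2 * k))).
Definition block (n k : nat) : seq letter := iter (3 * n) sigma [:: w (2 * k); w (2 * k).+1].

Inductive kind := KR | KS | KT.

Definition kind_eqb (x y : kind) : bool :=
  match x, y with KR, KR | KS, KS | KT, KT => true | _, _ => false end.
Lemma kind_eqP : Equality.axiom kind_eqb. Proof. by case; case; constructor. Qed.
HB.instance Definition _ := hasDecEq.Build kind kind_eqP.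

Definition pair_kind (k : nat) : kind :=
  match w (2 * k), w (2 * k).+1 with La, Lb => KR | La, La => KS | Lb, _ => KT end.

Definition kind_word (n : nat) (x : kind) : seq letter :=
  match x with KR => Rw n | KS => Sw n | KT => Tw n end.

Lemma mkseq_w_pair (k : nat) :
  mkseq w (2 * k.+1) = mkseq w (2 * k) ++ [:: w (2 * k); w (2 * k).+1].
Proof.
have -> : 2 * k.+1 = (2 * k).+2 by lia.
by rewrite !mkseqS -!cats1 -catA.
Qed.

Lemma block_start0 (n : nat) : block_start n 0 = 0.
Proof. by rewrite /block_start muln0 /= iter_sigma_nil. Qed.

Lemma block_startS (n k : nat) : block_start n k.+1 = block_start n k + size (block n k).
Proof. by rewrite /block_start /block mkseq_w_pair iter_sigma_cat size_cat. Qed.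

Lemma w_block (n k d : nat) :
  d < size (block n k) -> w (block_start n k + d) = nth La (block n k) d.
Proof.
move=> hd; rewrite (@w_iter_sigma_prefix (3 * n) (2 * k.+1)) mkseq_w_pair iter_sigma_cat.
  by rewrite nth_cat /block_start ltnNge leq_addr /= addKn.
by rewrite size_cat ltn_add2l.
Qed.

(* Because w has no factor bb, every block is one of R_n, S_n, T_n. *)
Lemma block_kind (n k : nat) : block n k = kind_word n (pair_kind k).
Proof.
rewrite /block /pair_kind -[[:: w _; _]]/([:: w (2 * k)] ++ [:: w (2 * k).+1]).
rewrite iter_sigma_cat; case E1: (w (2 * k)); case E2: (w (2 * k).+1) => //.
by move/w_no_bb: E2; rewrite E1.
Qed.

Lemma size_kind_word (n : nat) (x : kind) :
  0 < size (kind_word n x) /\ ~~ odd (size (kind_word n x)).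
Proof.
have [hA hB _] := size_AB_parity n; have [pA pB] := size_AB_gt0 (3 * n).
by case: x; rewrite /= /Rw /Sw /Tw size_cat oddD ?hA ?hB addn_gt0 ?pA ?pB.
Qed.

Lemma block_start_incr (n k : nat) : block_start n k < block_start n k.+1.
Proof.
by rewrite block_startS block_kind -addn1 leq_add2l; case: (size_kind_word n (pair_kind k)).
Qed.

Lemma block_start_even (n k : nat) : ~~ odd (block_start n k).
Proof.
elim: k => [|k IH]; first by rewrite block_start0.
have [_ ev] := size_kind_word n (pair_kind k).
by rewrite block_startS block_kind oddD (negbTE IH) (negbTE ev).
Qed.

Lemma C_a_block (n N k : nat) : block_start n k <= N < block_start n k.+1 ->
  C_a N = C_au (kind_word n (pair_kind k)) (N - block_start n k).
Proof.
move=> /andP[lo hi]; have hd : N - block_start n k < size (block n k).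
  by move: hi; rewrite block_startS; lia.
by rewrite /C_a /C_au -block_kind hd -w_block // subnKC.
Qed.

Section StrictlyIncreasing.

Variable f : nat -> nat.
Hypothesis f_incr : forall k, f k < f k.+1.

Lemma incr_leq : {mono f : i j / i <= j}.
Proof. exact: leq_mono (homo_ltn ltn_trans f_incr). Qed.

Lemma incr_ltn : {mono f : i j / i < j}.
Proof. exact: leqW_mono incr_leq. Qed.

Lemma incr_ge (k : nat) : k <= f k.
Proof. by elim: k => // k IH; apply: leq_ltn_trans IH (f_incr k). Qed.

Lemma bracket_exists : f 0 = 0 -> forall N, exists k, f k <= N < f k.+1.
Proof.
move=> f0 N; suff: forall K, N < f K -> exists k, f k <= N < f k.+1.
  by apply; apply: incr_ge.
elim=> [|K IH]; first by rewrite f0.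
by case: (ltnP N (f K)) => [/IH //|lo hi]; exists K; rewrite lo hi.
Qed.

Lemma bracket_uniq (N k k' : nat) :
  f k <= N < f k.+1 -> f k' <= N < f k'.+1 -> k = k'.
Proof.
move=> /andP[lo hi] /andP[lo' hi'].
have : f k < f k'.+1 /\ f k' < f k.+1 by split; apply: leq_ltn_trans; eassumption.
by rewrite !incr_ltn; lia.
Qed.

Lemma pow_series_hit (k : nat) : pow_series f (f k) = 1.
Proof.
rewrite /pow_series (eq_bigr (fun i => if nat_of_ord i == k then 1 else 0)).
  by rewrite -big_mkcond (big_ord1_eq _ (fun=> 1)) ltnS incr_ge.
by move=> i _; rewrite (inj_eq (incn_inj incr_leq)); case: eqP.
Qed.

End StrictlyIncreasing.

Lemma pow_series_nz (f : nat -> nat) (N : nat) :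
  pow_series f N != 0 -> exists k, f k = N.
Proof.
move=> nz; have [i /eqP hit | no_hit] := pickP (fun i : 'I_N.+1 => f i == N).
  by exists i.
by move: nz; rewrite /pow_series big1 // => i _; rewrite no_hit.
Qed.

Lemma enum_infinite (P : pred nat) : (forall x, exists2 y, x <= y & P y) ->
  exists e : nat -> nat, [/\ forall k, e k < e k.+1, forall k, P (e k) &
                             forall y, P y -> exists k, e k = y].
Proof.
move=> P_inf.
have ex x : exists y, P y && (x <= y) by have [y xy Py] := P_inf x; exists y; rewrite Py.
pose next x := ex_minn (ex x).
have nextP x : P (next x) && (x <= next x) by rewrite /next; case: ex_minnP.
have next_min x y : P y -> x <= y -> next x <= y.
  by move=> Py xy; rewrite /next; case: ex_minnP => m _; apply; rewrite Py xy.
pose e := fix e k := if k is k'.+1 then next (e k').+1 else next 0.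
have e_incr k : e k < e k.+1 by have /andP[_] := nextP (e k).+1.
exists e; split=> // [[|k]|y Py]; first by have /andP[] := nextP 0.
  by have /andP[] := nextP (e k).+1.
suff: forall K, y < e K -> exists k, e k = y by apply; apply: (incr_ge e_incr).
elim=> [|K IH] /=; first by rewrite ltnNge next_min.
move=> hy; case: (ltnP y (e K)) => [/IH //|ge].
case: (eqVneq (e K) y) => [<-|ne]; first by exists K.
by move: hy; rewrite ltnNge next_min // ltn_neqAle ne ge.
Qed.

Lemma conv_blocks (p e : nat -> nat) (P : pred nat) (u : seq letter) (N k0 : nat) :
  (forall k, p k < p k.+1) -> (forall k, e k < e k.+1) ->
  (forall k, P (e k)) -> (forall y, P y -> exists k, e k = y) ->
  (forall k, P k -> size u <= p k.+1 - p k) ->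
  p k0 <= N < p k0.+1 ->
  ps_mul (C_au u) (pow_series (fun k => p (e k))) N =
  if P k0 then C_au u (N - p k0) else 0.
Proof.
move=> p_incr e_incr Pe e_onto u_fits /andP[lo hi].
have pe_incr k : p (e k) < p (e k.+1) by rewrite (incr_ltn p_incr).
have term (i : 'I_N.+1) : C_au u i * pow_series (fun k => p (e k)) (N - i) =
    if P k0 && (nat_of_ord i == N - p k0) then C_au u i else 0.
  case: ifP => [/andP[Pk0 /eqP ->] | not_hit].
    have [k ek] := e_onto _ Pk0.
    by rewrite subKn // -ek (pow_series_hit pe_incr) muln1.
  case: (C_au u i =P 0) => [-> // | Cu].
  case: (pow_series (fun k => p (e k)) (N - i) =P 0) => [-> | /eqP/pow_series_nz [k ek]].
    by rewrite muln0.
  have iu : i < size u by move: Cu; rewrite /C_au; case: ifP.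
  have hk := u_fits _ (Pe k); have iN := ltn_ord i.
  have ek0 : e k = k0.
    by apply: (@bracket_uniq p p_incr N); [lia | rewrite lo hi].
  by move: not_hit; rewrite -ek0 Pe /=; case: eqP; lia.
rewrite /ps_mul (eq_bigr _ (fun i _ => term i)) -big_mkcond.
by rewrite (big_ord1_cond_eq _ (C_au u) (fun=> P k0)) ltnS leq_subr.
Qed.

Lemma w_shift (q i : nat) : i < size (A q) -> w (size (A q.+1) + i) = w i.
Proof.
have eA : A q.+2 = A q.+1 ++ A q by rewrite A_S B_S.
move=> hi; rewrite (wE hi) (wE (m := q.+2)); last by rewrite eA size_cat ltn_add2l.
by rewrite eA nth_cat ltnNge leq_addr /= addKn.
Qed.

(* Hence pair kinds recur: an even shift keeps the pairing aligned. *)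
Lemma pair_kind_shift (q c : nat) : ~~ odd (size (A q.+1)) ->
  (2 * c).+1 < size (A q) -> pair_kind ((size (A q.+1))./2 + c) = pair_kind c.
Proof.
move=> ev hc; set s := size (A q.+1).
have s2 : s = 2 * s./2 by rewrite -[LHS]odd_double_half (negbTE ev) add0n -muln2 mulnC.
have e1 : 2 * (s./2 + c) = s + 2 * c by lia.
have e2 : (s + 2 * c).+1 = s + (2 * c).+1 by lia.
by rewrite /pair_kind e1 e2 !w_shift // ltnW.
Qed.

(* The pairs of w = ab aa ba ... show each kind at the start. *)
Lemma kind_early (x : kind) : exists2 c, c < 3 & pair_kind c = x.
Proof. by case: x; [exists 0 | exists 1 | exists 2]; vm_compute. Qed.

Lemma kind_infinite (x : kind) (y0 : nat) : exists2 y, y0 <= y & pair_kind y == x.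
Proof.
have [c c3 <-] := kind_early x; set q := y0.+2.
have [_ _ ev] := size_AB_parity q.
have big_q := size_A_gt (3 * q).+1.
exists ((size (A (3 * q).+1))./2 + c).
  by move: big_q; rewrite /q; lia.
rewrite pair_kind_shift //; have := size_A_gt (3 * q); rewrite /q; lia.
Qed.

Lemma kind_positions (n : nat) (x : kind) :
  exists j : nat -> nat,
    [/\ forall k, j k < j k.+1, forall k, ~~ odd (j k) &
        forall N k0, block_start n k0 <= N < block_start n k0.+1 ->
          ps_mul (C_au (kind_word n x)) (pow_series j) N =
          if pair_kind k0 == x then C_au (kind_word n x) (N - block_start n k0) else 0].
Proof.
have [e [e_incr e_kind e_onto]] := enum_infinite (kind_infinite x).
exists (fun k => block_start n (e k)); split.
- by move=> k; rewrite (incr_ltn (block_start_incr n)).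
- by move=> k; apply: block_start_even.
- move=> N k0 hk0.
  apply: (conv_blocks (P := fun k => pair_kind k == x) (block_start_incr n) e_incr) => //.
  by move=> k /eqP <-; rewrite block_startS block_kind addKn.
Qed.

Theorem proposition5p6 (n : nat) (hn : 1 <= n) :
  exists j l m : nat -> nat,
    (forall k, j k < j k.+1) /\ (forall k, l k < l k.+1) /\
    (forall k, m k < m k.+1) /\
    (forall k, ~~ odd (j k) /\ ~~ odd (l k) /\ ~~ odd (m k)) /\
    (forall N : nat,
       C_a N =
       ps_add (ps_add (ps_mul (C_au (Rw n)) (pow_series j))
                      (ps_mul (C_au (Sw n)) (pow_series l)))
              (ps_mul (C_au (Tw n)) (pow_series m)) N).
Proof.
have [j [j_incr j_even j_conv]] := kind_positions n KR.
have [l [l_incr l_even l_conv]] := kind_positions n KS.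
have [m [m_incr m_even m_conv]] := kind_positions n KT.
exists j, l, m; do 3 split => //; split=> [k | N]; first by rewrite j_even l_even m_even.
have [k0 hk0] := bracket_exists (block_start_incr n) (block_start0 n) N.
rewrite /ps_add (j_conv _ _ hk0) (l_conv _ _ hk0) (m_conv _ _ hk0) (C_a_block hk0).
by case: (pair_kind k0); rewrite /= ?addn0.
Qed.
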